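(* Let $\Lambda$ be a finitely aligned $k$-graph, $c\in Z^2(\Lambda,\mathbb T)$, $\mathcal E$ a satiated subset of $\mathrm{FE}(\Lambda)$, and $I$ an ideal of $C^*(\Lambda,c;\mathcal E)$. Then: (1) $H_I:=\{v\in\Lambda^0:s^c_{\mathcal E}(v)\in I\}$ is hereditary and $\mathcal E$-saturated; (2) $\mathcal B_I:=\{F\in\mathrm{FE}(\Lambda\setminus\Lambda H_I):\Delta(s^c_{\mathcal E})^F\in I\}$ is a satiated subset of $\mathrm{FE}(\Lambda\setminus\Lambda H_I)$; (3) $\mathcal E_{H_I}\subseteq\mathcal B_I$, where $\mathcal E_{H}:=\{E\setminus EH:E\in\mathcal E,\ r(E)\notin H\}$.
   Context: $k$-graph notation: countable category $\Lambda$, degree functor $d:\Lambda\to\mathbb N^k$ with unique factorisation, $\Lambda^n=d^{-1}(n)$, vertices $\Lambda^0$, $r,s$; $EH=\{\lambda\in E:s(\lambda)\in H\}$, $\Lambda H=\{\lambda:s(\lambda)\in H\}$, $H\Lambda=\{\lambda:r(\lambda)\in H\}$. $\mathrm{MCE}(\mu,\nu)=\{\lambda\in\Lambda^{d(\mu)\vee d(\nu)}:\lambda=\mu\alpha=\nu\beta\}$; finitely aligned: all finite. $\mathrm{FE}(\Lambda)$: finite exhaustive $E\subseteq v\Lambda$ ($v=:r(E)$), $E\cap\Lambda^0=\emptyset$ (exhaustive: every $\lambda\in v\Lambda$ has $\mathrm{MCE}(\lambda,\mu)\neq\emptyset$ for some $\mu\in E$). $\mathrm{Ext}(\lambda;E)=\bigcup_{\mu\in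 E}\{\alpha:\lambda\alpha\in\mathrm{MCE}(\lambda,\mu)\}$. A subset $\mathcal E$ of $\mathrm{FE}(\Gamma)$ of a finitely aligned $k$-graph $\Gamma$ is satiated if closed under (S1) $F\mapsto F\cup\{\lambda\}$, $\lambda\in r(F)\Gamma\setminus\{r(F)\}$; (S2) $F\mapsto\mathrm{Ext}(\lambda;F)$, $\lambda\in r(F)\Gamma\setminus F\Gamma$; (S3) $F\mapsto F\setminus\{\lambda\lambda'\}$ if $\lambda,\lambda\lambda'\in F$, $\lambda'\ne s(\lambda)$; (S4) $(F,G)\mapsto(F\setminus\{\lambda\})\cup\lambda G$ if $\lambda\in F$, $G\in\mathcal E$, $r(G)=s(\lambda)$. $H\subseteq\Lambda^0$ is hereditary if $s(H\Lambda)\subseteq H$, and $\mathcal E$-saturated if $E\in\mathcal E$, $s(E)\subseteq H$ imply $r(E)\in H$. For hereditary $H$, $\Lambda\setminus\Lambda H$ is a finitely aligned $k$-graph with inherited structure. $Z^2(\Lambda,\mathbb T)$: normalised $\mathbb T$-valued 2-cocycles. Toeplitz-Cuntz-Krieger $(\Lambda,c)$-family: (TCK1) $t_v$ mutually orthogonal projections; (TCK2) $t_\mu t_\nu=c(\mu,\nu)t_{\mu\nu}$; (TCK3) $t_\lambda^*t_\lambda=t_{s(\lambda)}$; (TCK4) $t_\mu t_\mu^*t_\nu t_\nu^*=\sum_{\lambda\in\mathrm{MCE}(\mu,\nu)}t_\lambda t_\lambda^*$. $\Delta(t)^E=\prod_{\lambda\in E}(t_{r(E)}-t_\lambda t_\lambda^*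 )$ for finite $E\subseteq r(E)\Lambda$. $C^*(\Lambda,c;\mathcal E)$ is the universal $C^*$-algebra for Toeplitz-Cuntz-Krieger $(\Lambda,c)$-families with $\Delta(t)^E=0$ for all $E\in\mathcal E$, with generators $s^c_{\mathcal E}(\lambda)$. *)

From Stdlib Require Import Reals List.
Open Scope R_scope.
Set Implicit Arguments.

Record Cplx := mkCplx { Cre : R; Cim : R }.
Definition C0 : Cplx := mkCplx 0 0.
Definition C1 : Cplx := mkCplx 1 0.
Definition Cadd (x y : Cplx) : Cplx := mkCplx (Cre x + Cre y) (Cim x + Cim y).
Definition Cmul (x y : Cplx) : Cplx :=
  mkCplx (Cre x * Cre y - Cim x * Cim y) (Cre x * Cim y + Cim x * Cre y).
Definition Cconj (x : Cplx) : Cplx := mkCplx (Cre x) (- Cim x).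
Definition Cmod (x : Cplx) : R := sqrt (Cre x * Cre x + Cim x * Cim x).

Record CStar := {
  cs_car :> Type;
  cs_zero : cs_car;
  cs_add : cs_car -> cs_car -> cs_car;
  cs_opp : cs_car -> cs_car;
  cs_scal : Cplx -> cs_car -> cs_car;
  cs_mul : cs_car -> cs_car -> cs_car;
  cs_star : cs_car -> cs_car;
  cs_norm : cs_car -> R;
  cs_addA : forall a b c, cs_add a (cs_add b c) = cs_add (cs_add a b) c;
  cs_addC : forall a b, cs_add a b = cs_add b a;
  cs_add0 : forall a, cs_add cs_zero a = a;
  cs_addN : forall a, cs_add a (cs_opp a) = cs_zero;
  cs_scal1 : forall a, cs_scal C1 a = a;
  cs_scalA : forall x y a, cs_scal (Cmul x y) a = cs_scal x (cs_scal y a);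
  cs_scalDl : forall x y a, cs_scal (Cadd x y) a = cs_add (cs_scal x a) (cs_scal y a);
  cs_scalDr : forall x a b, cs_scal x (cs_add a b) = cs_add (cs_scal x a) (cs_scal x b);
  cs_mulA : forall a b c, cs_mul a (cs_mul b c) = cs_mul (cs_mul a b) c;
  cs_mulDl : forall a b c, cs_mul (cs_add a b) c = cs_add (cs_mul a c) (cs_mul b c);
  cs_mulDr : forall a b c, cs_mul a (cs_add b c) = cs_add (cs_mul a b) (cs_mul a c);
  cs_scal_mull : forall x a b, cs_scal x (cs_mul a b) = cs_mul (cs_scal x a) b;
  cs_scal_mulr : forall x a b, cs_scal x (cs_mul a b) = cs_mul a (cs_scal x b);
  cs_starK : forall a, cs_star (cs_star a) = a;
  cs_starD : forall a b, cs_star (cs_add a b) = cs_add (cs_star a) (cs_star b);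
  cs_starZ : forall x a, cs_star (cs_scal x a) = cs_scal (Cconj x) (cs_star a);
  cs_starM : forall a b, cs_star (cs_mul a b) = cs_mul (cs_star b) (cs_star a);
  cs_norm_eq0 : forall a, cs_norm a = 0 <-> a = cs_zero;
  cs_normD : forall a b, cs_norm (cs_add a b) <= cs_norm a + cs_norm b;
  cs_normZ : forall x a, cs_norm (cs_scal x a) = Cmod x * cs_norm a;
  cs_normM : forall a b, cs_norm (cs_mul a b) <= cs_norm a * cs_norm b;
  cs_Cstar_id : forall a, cs_norm (cs_mul (cs_star a) a) = cs_norm a * cs_norm a;
  cs_complete : forall u : nat -> cs_car,
    (forall eps, 0 < eps -> exists N, forall m n, (N <= m)%nat -> (N <= n)%nat ->
        cs_norm (cs_add (u m) (cs_opp (u n))) < eps) ->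
    exists l, forall eps, 0 < eps -> exists N, forall n, (N <= n)%nat ->
        cs_norm (cs_add (u n) (cs_opp l)) < eps
}.

Arguments cs_zero {_}.
Arguments cs_add {_} _ _.
Arguments cs_opp {_} _.
Arguments cs_scal {_} _ _.
Arguments cs_mul {_} _ _.
Arguments cs_star {_} _.
Arguments cs_norm {_} _.

Definition closed_ideal (A : CStar) (I : A -> Prop) : Prop :=
  I cs_zero /\
  (forall a b, I a -> I b -> I (cs_add a b)) /\
  (forall x a, I a -> I (cs_scal x a)) /\
  (forall a b, I b -> I (cs_mul a b)) /\
  (forall a b, I a -> I (cs_mul a b)) /\
  (forall (u : nat -> A) l, (forall n, I (u n)) ->
     (forall eps, 0 < eps -> exists N, forall n, (N <= n)%nat ->
        cs_norm (cs_add (u n) (cs_opp l)) < eps) -> I l).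

Definition star_hom {A B : CStar} (phi : A -> B) : Prop :=
  (forall a b, phi (cs_add a b) = cs_add (phi a) (phi b)) /\
  (forall x a, phi (cs_scal x a) = cs_scal x (phi a)) /\
  (forall a b, phi (cs_mul a b) = cs_mul (phi a) (phi b)) /\
  (forall a, phi (cs_star a) = cs_star (phi a)).

(* Morphisms live in kM; kdom carves out the morphisms of the graph (this lets
   subgraphs such as Lambda \ Lambda H be expressed by restricting kdom).
   Vertices are the degree-0 morphisms (identities).  Degrees are nat -> nat
   functions, supported on 0..k-1 by the k-graph axioms. *)
Record kg := {
  kM : Type;
  kdom : kM -> Prop;
  kr : kM -> kM;
  ks : kM -> kM;
  kcomp : kM -> kM -> kM;
  kd : kM -> nat -> nat
}.

Definition deg0 : nat -> nat := fun _ => 0%nat.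
Definition dadd (m n : nat -> nat) : nat -> nat := fun i => (m i + n i)%nat.
Definition djoin (m n : nat -> nat) : nat -> nat := fun i => Nat.max (m i) (n i).

Section KG.
Variable G : kg.

Definition Vertex (v : kM G) : Prop := kdom G v /\ kd G v = deg0.

Definition is_kgraph (k : nat) : Prop :=
  (exists f : kM G -> nat, forall x y, kdom G x -> kdom G y -> f x = f y -> x = y) /\
  (forall l, kdom G l -> forall i, (k <= i)%nat -> kd G l i = 0%nat) /\
  (forall l, kdom G l -> Vertex (kr G l) /\ Vertex (ks G l)) /\
  (forall v, Vertex v -> kr G v = v /\ ks G v = v) /\
  (forall m n, kdom G m -> kdom G n -> ks G m = kr G n ->
     kdom G (kcomp G m n) /\ kr G (kcomp G m n) = kr G m /\
     ks G (kcomp G m n) = ks G n /\ kd G (kcomp G m n) = dadd (kd G m) (kd G n)) /\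
  (forall l, kdom G l -> kcomp G (kr G l) l = l /\ kcomp G l (ks G l) = l) /\
  (forall a b c, kdom G a -> kdom G b -> kdom G c -> ks G a = kr G b -> ks G b = kr G c ->
     kcomp G (kcomp G a b) c = kcomp G a (kcomp G b c)) /\
  (forall l m n, kdom G l -> kd G l = dadd m n ->
     (exists a b, kdom G a /\ kdom G b /\ ks G a = kr G b /\ kd G a = m /\ kd G b = n /\
        l = kcomp G a b) /\
     (forall a b a' b', kdom G a -> kdom G b -> kdom G a' -> kdom G b' ->
        ks G a = kr G b -> ks G a' = kr G b' -> kd G a = m -> kd G b = n ->
        kd G a' = m -> kd G b' = n -> l = kcomp G a b -> l = kcomp G a' b' ->
        a = a' /\ b = b')).

Definition finite_set {T : Type} (P : T -> Prop) : Prop :=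
  exists l : list T, forall x, P x <-> In x l.

Definition MCE (m n l : kM G) : Prop :=
  kdom G l /\ kd G l = djoin (kd G m) (kd G n) /\
  (exists a, kdom G a /\ ks G m = kr G a /\ l = kcomp G m a) /\
  (exists b, kdom G b /\ ks G n = kr G b /\ l = kcomp G n b).

Definition finitely_aligned : Prop :=
  forall m n, kdom G m -> kdom G n -> finite_set (MCE m n).

Definition FEat (E : kM G -> Prop) (v : kM G) : Prop :=
  Vertex v /\ finite_set E /\
  (forall m, E m -> kdom G m /\ kr G m = v /\ ~ Vertex m) /\
  (forall l, kdom G l -> kr G l = v -> exists m, E m /\ exists p, MCE l m p).

Definition FE (E : kM G -> Prop) : Prop := exists v, FEat E v.

Definition Ext (l : kM G) (F : kM G -> Prop) (a : kM G) : Prop :=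
  exists m, F m /\ kdom G a /\ ks G l = kr G a /\ MCE l m (kcomp G l a).

Definition satiated (calE : (kM G -> Prop) -> Prop) : Prop :=
  (forall F, calE F -> FE F) /\
  (forall F v l, calE F -> FEat F v -> kdom G l -> kr G l = v -> l <> v ->
     calE (fun m => F m \/ m = l)) /\
  (forall F v l, calE F -> FEat F v -> kdom G l -> kr G l = v ->
     ~ (exists m a, F m /\ kdom G a /\ ks G m = kr G a /\ l = kcomp G m a) ->
     calE (Ext l F)) /\
  (forall F l l', calE F -> F l -> kdom G l' -> ks G l = kr G l' ->
     F (kcomp G l l') -> l' <> ks G l ->
     calE (fun m => F m /\ m <> kcomp G l l')) /\
  (forall F F' l, calE F -> calE F' -> F l -> FEat F' (ks G l) ->
     calE (fun m => (F m /\ m <> l) \/ exists g, F' g /\ m = kcomp G l g)).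

Definition hereditary (H : kM G -> Prop) : Prop :=
  forall l, kdom G l -> H (kr G l) -> H (ks G l).

Definition E_saturated (calE : (kM G -> Prop) -> Prop) (H : kM G -> Prop) : Prop :=
  forall E v, calE E -> FEat E v -> (forall m, E m -> H (ks G m)) -> H v.

Definition cocycle (c : kM G -> kM G -> Cplx) : Prop :=
  (forall m n, kdom G m -> kdom G n -> ks G m = kr G n -> Cmod (c m n) = 1) /\
  (forall a b d, kdom G a -> kdom G b -> kdom G d -> ks G a = kr G b -> ks G b = kr G d ->
     Cmul (c a b) (c (kcomp G a b) d) = Cmul (c b d) (c a (kcomp G b d))) /\
  (forall l, kdom G l -> c l (ks G l) = C1 /\ c (kr G l) l = C1).

Variable A : CStar.

Definition sum_over (P : kM G -> Prop) (f : kM G -> A) (x : A) : Prop :=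
  exists l, NoDup l /\ (forall m, P m <-> In m l) /\
    x = fold_right (fun m acc => cs_add (f m) acc) cs_zero l.

Fixpoint prod_list (f : kM G -> A) (dflt : A) (l : list (kM G)) : A :=
  match l with
  | nil => dflt
  | x :: nil => f x
  | x :: l' => cs_mul (f x) (prod_list f dflt l')
  end.

Definition proj_of (t : kM G -> A) (l : kM G) : A := cs_mul (t l) (cs_star (t l)).

(* Delta(t)^E = prod_{l in E} (t_v - t_l t_l^* ) computed along some enumeration of E *)
Definition Delta_is (t : kM G -> A) (v : kM G) (E : kM G -> Prop) (x : A) : Prop :=
  exists l, NoDup l /\ (forall m, E m <-> In m l) /\
    x = prod_list (fun m => cs_add (t v) (cs_opp (proj_of t m))) (t v) l.

Definition TCK_family (c : kM G -> kM G -> Cplx) (t : kM G -> A) : Prop :=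
  (forall v, Vertex v -> cs_mul (t v) (t v) = t v /\ cs_star (t v) = t v) /\
  (forall v w, Vertex v -> Vertex w -> v <> w -> cs_mul (t v) (t w) = cs_zero) /\
  (forall m n, kdom G m -> kdom G n -> ks G m = kr G n ->
     cs_mul (t m) (t n) = cs_scal (c m n) (t (kcomp G m n))) /\
  (forall l, kdom G l -> cs_mul (cs_star (t l)) (t l) = t (ks G l)) /\
  (forall m n, kdom G m -> kdom G n ->
     sum_over (MCE m n) (proj_of t) (cs_mul (proj_of t m) (proj_of t n))).

Definition CK_family (c : kM G -> kM G -> Cplx) (calE : (kM G -> Prop) -> Prop)
  (t : kM G -> A) : Prop :=
  TCK_family c t /\ (forall E v, calE E -> FEat E v -> Delta_is t v E cs_zero).

End KG.

Definition is_universal (G : kg) (c : kM G -> kM G -> Cplx)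
  (calE : (kM G -> Prop) -> Prop) (A : CStar) (s : kM G -> A) : Prop :=
  CK_family G A c calE s /\
  forall (B : CStar) (t : kM G -> B), CK_family G B c calE t ->
    (exists phi : A -> B, star_hom phi /\ forall l, kdom G l -> phi (s l) = t l) /\
    (forall phi psi : A -> B, star_hom phi -> star_hom psi ->
       (forall l, kdom G l -> phi (s l) = t l) ->
       (forall l, kdom G l -> psi (s l) = t l) -> forall a, phi a = psi a).

Definition restrict (G : kg) (H : kM G -> Prop) : kg :=
  {| kM := kM G; kdom := fun l => kdom G l /\ ~ H (ks G l);
     kr := kr G; ks := ks G; kcomp := kcomp G; kd := kd G |}.

Definition H_of (G : kg) (A : CStar) (s : kM G -> A) (I : A -> Prop) : kM G -> Prop :=
  fun v => Vertex G v /\ I (s v).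

Definition B_of (G : kg) (A : CStar) (s : kM G -> A) (I : A -> Prop) (H : kM G -> Prop)
  : (kM G -> Prop) -> Prop :=
  fun F => FE (restrict G H) F /\
    exists v, FEat (restrict G H) F v /\ exists x, Delta_is G A s v F x /\ I x.

Definition E_of (G : kg) (calE : (kM G -> Prop) -> Prop) (H : kM G -> Prop)
  : (kM G -> Prop) -> Prop :=
  fun F => exists E v, calE E /\ FEat G E v /\ ~ H v /\
    F = (fun m => E m /\ ~ H (ks G m)).

From Pilot Require Import Defs.
From Stdlib Require Import Reals List Lia Lra Permutation.
From Stdlib Require Import Classical ClassicalEpsilon FunctionalExtensionality.

(* Everything is reduced to computations with defect products
   [dprod v L = prod_{m in L} (s v - s m s m^* )] taken along explicit lists.  For a Toeplitz-Cuntz-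
   Krieger family the range projections commute, so a defect product depends only
   on the set it enumerates; conjugation by [s l] turns [Delta^F] into
   [Delta^{Ext(l; F)}], and [Delta^{l F'}] expands as [Delta_l + s_l Delta^{F'} s_l^*].
   Finally, modulo [I] the factors of paths with source in [H_I] may be dropped,
   which yields each clause of the theorem. *)

Declare Scope cs_scope.
Notation "a + b" := (cs_add a b) : cs_scope.
Notation "a * b" := (cs_mul a b) : cs_scope.
Notation "- a" := (cs_opp a) : cs_scope.
Notation "0" := (cs_zero) : cs_scope.

Section Algebra.
Context {A : CStar}.
Local Open Scope cs_scope.

Lemma addrC (a b : A) : a + b = b + a. Proof. apply cs_addC. Qed.
Lemma addrA (a b c : A) : a + (b + c) = a + b + c. Proof. apply cs_addA. Qed.
Lemma add0r (a : A) : 0 + a = a. Proof. apply cs_add0. Qed.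
Lemma addr0 (a : A) : a + 0 = a. Proof. rewrite addrC; apply add0r. Qed.
Lemma addrN (a : A) : a + - a = 0. Proof. apply cs_addN. Qed.
Lemma addNr (a : A) : - a + a = 0. Proof. rewrite addrC; apply addrN. Qed.
Lemma mulA (a b c : A) : a * (b * c) = a * b * c. Proof. apply cs_mulA. Qed.
Lemma mulDl (a b c : A) : (a + b) * c = a * c + b * c. Proof. apply cs_mulDl. Qed.
Lemma mulDr (a b c : A) : a * (b + c) = a * b + a * c. Proof. apply cs_mulDr. Qed.
Lemma starM (a b : A) : cs_star (a * b) = cs_star b * cs_star a. Proof. apply cs_starM. Qed.
Lemma starK (a : A) : cs_star (cs_star a) = a. Proof. apply cs_starK. Qed.

Lemma add_swap_middle (a b c d : A) : a + b + (c + d) = a + c + (b + d).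
Proof.
  rewrite <- !addrA. f_equal. rewrite !addrA. f_equal. apply addrC.
Qed.

Lemma add_cancel (a b c : A) : a + b = a + c -> b = c.
Proof.
  intro E. rewrite <- (add0r b), <- (add0r c), <- (addNr a), <- !addrA, E.
  reflexivity.
Qed.

Lemma opp_unique (a b : A) : a + b = 0 -> b = - a.
Proof. intro E. apply (add_cancel a). rewrite E, addrN. reflexivity. Qed.

Lemma oppK (a : A) : - - a = a.
Proof. symmetry. apply opp_unique, addNr. Qed.

Lemma opp0 : - (0 : A) = 0.
Proof. symmetry. apply opp_unique, add0r. Qed.

Lemma oppD (a b : A) : - (a + b) = - a + - b.
Proof.
  symmetry. apply opp_unique.
  rewrite (addrC (- a) (- b)), addrA, <- (addrA a b (- b)), addrN, addr0, addrN.
  reflexivity.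
Qed.

Lemma mul0r (a : A) : 0 * a = 0.
Proof. apply (add_cancel (0 * a)). rewrite <- mulDl, add0r, addr0. reflexivity. Qed.

Lemma mulr0 (a : A) : a * 0 = 0.
Proof. apply (add_cancel (a * 0)). rewrite <- mulDr, add0r, addr0. reflexivity. Qed.

Lemma mulNr (a b : A) : (- a) * b = - (a * b).
Proof. apply opp_unique. rewrite <- mulDl, addrN, mul0r. reflexivity. Qed.

Lemma mulrN (a b : A) : a * (- b) = - (a * b).
Proof. apply opp_unique. rewrite <- mulDr, addrN, mulr0. reflexivity. Qed.

Lemma star0 : cs_star (0 : A) = 0.
Proof.
  apply (add_cancel (cs_star (0 : A))). rewrite <- cs_starD, add0r, addr0.
  reflexivity.
Qed.

(* Multiplication by the scalar -1 is negation; it shows ideals are closed under [-]. *)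
Lemma scal_minus1 (a : A) : cs_scal (mkCplx (-1) 0) a = - a.
Proof.
  apply opp_unique. rewrite <- (cs_scal1 _ a) at 1. rewrite <- cs_scalDl.
  apply (add_cancel (cs_scal (Cadd Defs.C1 (mkCplx (-1) 0)) a)).
  rewrite <- cs_scalDl, addr0. f_equal. unfold Cadd, Defs.C1; simpl. f_equal; ring.
Qed.

Lemma scal_mul2 (x y : Cplx) (a b : A) :
  cs_scal x a * cs_scal y b = cs_scal (Cmul x y) (a * b).
Proof. rewrite cs_scalA, <- cs_scal_mull, <- cs_scal_mulr. reflexivity. Qed.

Lemma mul_sum_l (B : Type) (g : B -> A) (L : list B) (a : A) :
  a * fold_right (fun m acc => g m + acc) 0 L = fold_right (fun m acc => a * g m + acc) 0 L.
Proof. induction L; simpl. apply mulr0. rewrite mulDr, IHL. reflexivity. Qed.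

Lemma mul_sum_r (B : Type) (g : B -> A) (L : list B) (a : A) :
  fold_right (fun m acc => g m + acc) 0 L * a = fold_right (fun m acc => g m * a + acc) 0 L.
Proof. induction L; simpl. apply mul0r. rewrite mulDl, IHL. reflexivity. Qed.

Variable I : A -> Prop.
Hypothesis HI : closed_ideal A I.

Lemma ideal_zero : I 0. Proof. apply HI. Qed.
Lemma ideal_add a b : I a -> I b -> I (a + b). Proof. apply HI. Qed.
Lemma ideal_mul_l a b : I b -> I (a * b). Proof. apply HI. Qed.
Lemma ideal_mul_r a b : I a -> I (a * b). Proof. apply HI. Qed.

Lemma ideal_opp a : I a -> I (- a).
Proof. intro Ia. rewrite <- scal_minus1. apply HI, Ia. Qed.

Definition eqI (a b : A) : Prop := I (a + - b).

Lemma eqI_refl a : eqI a a.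
Proof. unfold eqI. rewrite addrN. apply HI. Qed.

Lemma eqI_sym a b : eqI a b -> eqI b a.
Proof. unfold eqI. intro E. apply ideal_opp in E. rewrite oppD, oppK, addrC in E. exact E. Qed.

Lemma eqI_trans a b c : eqI a b -> eqI b c -> eqI a c.
Proof.
  unfold eqI. intros E1 E2. pose proof (ideal_add _ _ E1 E2) as E.
  rewrite <- addrA, (addrA (- b) b), addNr, add0r in E. exact E.
Qed.

Lemma eqI_mul_l a b c : eqI b c -> eqI (a * b) (a * c).
Proof. unfold eqI. intro E. rewrite <- mulrN, <- mulDr. apply ideal_mul_l, E. Qed.

Lemma eqI_ideal a b : eqI a b -> I b -> I a.
Proof.
  unfold eqI. intros E Ib. pose proof (ideal_add _ _ E Ib) as Ia.
  rewrite <- addrA, addNr, addr0 in Ia. exact Ia.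
Qed.

End Algebra.

Section KGraph.
Variable k : nat.
Variable G : kg.
Hypothesis HG : is_kgraph G k.

Notation dom := (kdom G).
Notation rr := (kr G).
Notation ss := (ks G).
Notation cp := (kcomp G).
Notation dg := (kd G).

Lemma rs_vertex l : dom l -> Vertex G (rr l) /\ Vertex G (ss l).
Proof. destruct HG as [_ [_ [E _]]]. apply E. Qed.

Lemma vertex_rs v : Vertex G v -> rr v = v /\ ss v = v.
Proof. destruct HG as [_ [_ [_ [E _]]]]. apply E. Qed.

Lemma comp_props m n : dom m -> dom n -> ss m = rr n ->
  dom (cp m n) /\ rr (cp m n) = rr m /\ ss (cp m n) = ss n /\
  dg (cp m n) = dadd (dg m) (dg n).
Proof. destruct HG as [_ [_ [_ [_ [E _]]]]]. apply E. Qed.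

Lemma comp_id_l l : dom l -> cp (rr l) l = l.
Proof. destruct HG as [_ [_ [_ [_ [_ [E _]]]]]]. apply E. Qed.

Lemma comp_id_r l : dom l -> cp l (ss l) = l.
Proof. destruct HG as [_ [_ [_ [_ [_ [E _]]]]]]. apply E. Qed.

Lemma comp_assoc a b c : dom a -> dom b -> dom c -> ss a = rr b -> ss b = rr c ->
  cp (cp a b) c = cp a (cp b c).
Proof. destruct HG as [_ [_ [_ [_ [_ [_ [E _]]]]]]]. apply E. Qed.

Lemma factorisation l m n : dom l -> dg l = dadd m n ->
  exists a b, dom a /\ dom b /\ ss a = rr b /\ dg a = m /\ dg b = n /\ l = cp a b.
Proof. destruct HG as [_ [_ [_ [_ [_ [_ [_ E]]]]]]]. intros. apply E; auto. Qed.

Lemma dom_vertex v : Vertex G v -> dom v. Proof. intros [Hv _]; exact Hv. Qed.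
Lemma dom_r l : dom l -> dom (rr l). Proof. intro. apply dom_vertex, rs_vertex; auto. Qed.
Lemma dom_s l : dom l -> dom (ss l). Proof. intro. apply dom_vertex, rs_vertex; auto. Qed.
Lemma vertex_r v : Vertex G v -> rr v = v. Proof. intro. apply vertex_rs; auto. Qed.
Lemma vertex_s v : Vertex G v -> ss v = v. Proof. intro. apply vertex_rs; auto. Qed.
Lemma r_s l : dom l -> rr (ss l) = ss l. Proof. intro. apply vertex_r, rs_vertex; auto. Qed.
Lemma s_r l : dom l -> ss (rr l) = rr l. Proof. intro. apply vertex_s, rs_vertex; auto. Qed.

Lemma dadd_cancel m n n' : dadd m n = dadd m n' -> n = n'.
Proof.
  intro E. apply functional_extensionality. intro i.
  apply (f_equal (fun h => h i)) in E. unfold dadd in E. lia.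
Qed.

Lemma common_prefix x y x' y' : dom x -> dom y -> dom x' -> dom y' ->
  ss x = rr y -> ss x' = rr y' -> dg x = dg x' -> cp x y = cp x' y' -> x = x' /\ y = y'.
Proof.
  intros Hx Hy Hx' Hy' Exy Exy' Ed E.
  destruct (comp_props x y) as [Hxy [_ [_ Dxy]]]; auto.
  destruct (comp_props x' y') as [_ [_ [_ Dxy']]]; auto.
  assert (Edy : dg y = dg y').
  { apply (dadd_cancel (dg x)). rewrite <- Dxy, Ed, <- Dxy', E. reflexivity. }
  destruct HG as [_ [_ [_ [_ [_ [_ [_ Hf]]]]]]].
  destruct (Hf (cp x y) (dg x) (dg y) Hxy Dxy) as [_ Hu].
  apply (Hu x y x' y'); auto.
Qed.

Lemma cancel_left x y y' : dom x -> dom y -> dom y' -> ss x = rr y -> ss x = rr y' ->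
  cp x y = cp x y' -> y = y'.
Proof.
  intros. assert (dg x = dg x) by reflexivity.
  destruct (common_prefix x y x y') as [_ E]; auto.
Qed.

Lemma factor_through x y (D : nat -> nat) : dom x -> dom y -> ss x = rr y ->
  (forall i, dg x i <= D i)%nat -> (forall i, D i <= dg (cp x y) i)%nat ->
  exists z e, dom z /\ dom e /\ ss x = rr z /\ ss z = rr e /\ dg (cp x z) = D /\
    cp x y = cp (cp x z) e.
Proof.
  intros Hx Hy Hxy H1 H2.
  destruct (comp_props x y) as [_ [_ [_ Dxy]]]; auto. rewrite Dxy in H2. unfold dadd in H2.
  destruct (factorisation y (fun i => D i - dg x i)%nat (fun i => dg y i + dg x i - D i)%nat)
    as [z [e [Hz [He [Eze [Dz [De Ey]]]]]]]; auto.
  { apply functional_extensionality. intro i. unfold dadd.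
    specialize (H1 i). specialize (H2 i). lia. }
  subst y. destruct (comp_props z e) as [_ [Erze _]]; auto.
  exists z, e. repeat split; auto.
  - congruence.
  - destruct (comp_props x z) as [_ [_ [_ Dxz]]]; [auto | auto | congruence |].
    rewrite Dxz, Dz. apply functional_extensionality. intro i. unfold dadd.
    specialize (H1 i). lia.
  - symmetry. apply comp_assoc; auto. congruence.
Qed.

Lemma comp_deg0 a y : dom a -> dom y -> ss a = rr y -> dg y = deg0 -> cp a y = a.
Proof.
  intros Ha Hy E D. assert (Vertex G y) by (split; auto).
  rewrite (vertex_r y) in E by auto. subst y. apply comp_id_r; auto.
Qed.

Lemma comp_proper l l' : dom l -> dom l' -> ss l = rr l' -> l' <> ss l -> l <> cp l l'.
Proof.
  intros Hl Hl' E Hne Eq. apply Hne.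
  destruct (comp_props l l') as [_ [_ [_ D]]]; auto.
  assert (D0 : dg l' = deg0).
  { apply (dadd_cancel (dg l)). rewrite <- D, <- Eq. apply functional_extensionality.
    intro i. unfold dadd, deg0. lia. }
  rewrite E. symmetry. apply vertex_r. split; auto.
Qed.

Lemma comp_deg0_l l g : dom l -> dom g -> ss l = rr g -> dg (cp l g) = deg0 -> dg l = deg0.
Proof.
  intros Hl Hg E D. destruct (comp_props l g) as [_ [_ [_ Dlg]]]; auto.
  apply functional_extensionality. intro i. apply (f_equal (fun h => h i)) in Dlg.
  rewrite D in Dlg. unfold dadd, deg0 in *. lia.
Qed.

Lemma MCE_same_degree a a' : dom a -> dom a' -> dg a = dg a' -> a <> a' ->
  forall x, ~ MCE G a a' x.
Proof.
  intros Ha Ha' Ed Hne x [Hx [Dx [[y [Hy [Ey Exy]]] [y' [Hy' [Ey' Exy']]]]]].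
  apply Hne.
  assert (Dy : dg y = deg0).
  { apply (dadd_cancel (dg a)). destruct (comp_props a y) as [_ [_ [_ E]]]; auto.
    rewrite <- E, <- Exy, Dx, <- Ed. apply functional_extensionality; intro i.
    unfold djoin, dadd, deg0; lia. }
  assert (Dy' : dg y' = deg0).
  { apply (dadd_cancel (dg a')). destruct (comp_props a' y') as [_ [_ [_ E]]]; auto.
    rewrite <- E, <- Exy', Dx, <- Ed. apply functional_extensionality; intro i.
    unfold djoin, dadd, deg0; lia. }
  rewrite comp_deg0 in Exy by auto. rewrite comp_deg0 in Exy' by auto. congruence.
Qed.

Lemma MCE_extension l l' : dom l -> dom l' -> ss l = rr l' ->
  forall q, MCE G (cp l l') l q <-> q = cp l l'.
Proof.
  intros Hl Hl' E q. destruct (comp_props l l') as [Hd [Er [Es Ed]]]; auto. split.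
  - intros [Hq [Dq [[a [Ha [Ea Eqa]]] _]]].
    assert (Da : dg a = deg0).
    { apply (dadd_cancel (dg (cp l l'))).
      destruct (comp_props (cp l l') a) as [_ [_ [_ E2]]]; auto.
      rewrite <- E2, <- Eqa, Dq, Ed. apply functional_extensionality; intro i.
      unfold djoin, dadd, deg0; lia. }
    rewrite comp_deg0 in Eqa; auto.
  - intro Eq. subst q. repeat split; auto.
    + rewrite Ed. apply functional_extensionality; intro i. unfold djoin, dadd; lia.
    + exists (ss (cp l l')). split; [apply dom_s; auto|]. split; [rewrite r_s; auto|].
      rewrite comp_id_r; auto.
    + exists l'. auto.
Qed.

Lemma common_extension_MCE x y a b : dom x -> dom y -> dom a -> dom b ->
  ss x = rr a -> ss y = rr b -> cp x a = cp y b ->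
  exists q e, MCE G x y q /\ dom e /\ ss q = rr e /\ cp x a = cp q e.
Proof.
  intros Hx Hy Ha Hb Exa Eyb E.
  destruct (comp_props x a) as [_ [_ [_ Dxa]]]; auto.
  destruct (comp_props y b) as [_ [_ [_ Dyb]]]; auto.
  set (D := djoin (dg x) (dg y)).
  assert (Bx : forall i, (D i <= dg (cp x a) i)%nat).
  { intro i. unfold D, djoin. pose proof (f_equal (fun h => h i) Dxa) as E1.
    pose proof (f_equal (fun h => h i) Dyb) as E2. rewrite <- E in E2.
    simpl in E1, E2. unfold dadd in *. lia. }
  destruct (factor_through x a D) as [z1 [e1 [Hz1 [He1 [E1 [E2 [D1 Eq1]]]]]]]; auto.
  { intro i. unfold D, djoin. lia. }
  destruct (factor_through y b D) as [z2 [e2 [Hz2 [He2 [E3 [E4 [D2 Eq2]]]]]]]; auto.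
  { intro i. unfold D, djoin. lia. }
  { rewrite <- E. exact Bx. }
  destruct (comp_props x z1) as [Hq1 [_ [Es1 _]]]; auto.
  destruct (comp_props y z2) as [Hq2 [_ [Es2 _]]]; auto.
  destruct (common_prefix (cp x z1) e1 (cp y z2) e2) as [Eq12 _]; auto; try congruence.
  exists (cp x z1), e1. repeat split; auto; try congruence.
  - exists z1. auto.
  - exists z2. rewrite Eq12. auto.
Qed.

End KGraph.

Definition keep {T : Type} (P : T -> Prop) (x : T) : bool :=
  if excluded_middle_informative (P x) then true else false.

Lemma In_filter_keep {T : Type} (P : T -> Prop) (L : list T) x :
  In x (filter (keep P) L) <-> In x L /\ P x.
Proof.
  rewrite filter_In. unfold keep.
  destruct (excluded_middle_informative (P x)); intuition discriminate.
Qed.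

Lemma filter_keep_False {T : Type} (L : list T) : filter (keep (fun _ => False)) L = nil.
Proof.
  induction L as [|x L IH]; simpl; auto. unfold keep at 1.
  destruct (excluded_middle_informative False); [contradiction | exact IH].
Qed.

Section Restriction.
Variable k : nat.
Variable G : kg.
Hypothesis HG : is_kgraph G k.
Variable H : kM G -> Prop.
Hypothesis H_hered : hereditary G H.

Notation dom := (kdom G).
Notation rr := (kr G).
Notation ss := (ks G).
Notation cp := (kcomp G).
Notation dg := (kd G).
Local Notation Gr := (restrict G H).

Lemma range_not_H l : dom l -> ~ H (ss l) -> ~ H (rr l).
Proof. intros Hl Hs Hr. apply Hs, H_hered; auto. Qed.

Lemma restrict_vertex v : Vertex Gr v <-> Vertex G v /\ ~ H v.
Proof.
  split.
  - intros [[Hd Hn] Hdg]. assert (Hv : Vertex G v) by (split; auto).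
    rewrite (vertex_s _ _ HG) in Hn; auto.
  - intros [Hv Hn]. split; [split|]; [apply Hv | | apply Hv].
    rewrite (vertex_s _ _ HG); auto.
Qed.

Lemma restrict_MCE m n q : dom m -> dom n ->
  (MCE Gr m n q <-> MCE G m n q /\ ~ H (ss q)).
Proof.
  intros Hm Hn. split.
  - intros [[Hq Hh] [Dq [[a [[Ha _] [Ea Eq]]] [b [[Hb _] [Eb Eqb]]]]]].
    repeat split; auto. exists a; auto. exists b; auto.
  - intros [[Hq [Dq [[a [Ha [Ea Eq]]] [b [Hb [Eb Eqb]]]]]] Hh].
    split; [split; auto|]. split; auto. split.
    + exists a. destruct (comp_props _ _ HG m a) as [_ [_ [E _]]]; auto.
      repeat split; auto. simpl. rewrite <- E, <- Eq. auto.
    + exists b. destruct (comp_props _ _ HG n b) as [_ [_ [E _]]]; auto.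
      repeat split; auto. simpl. rewrite <- E, <- Eqb. auto.
Qed.

Lemma restrict_common_extension x y a b : dom x -> dom y -> dom a -> dom b ->
  ss x = rr a -> ss y = rr b -> cp x a = cp y b -> ~ H (ss (cp x a)) ->
  exists q, MCE Gr x y q.
Proof.
  intros Hx Hy Ha Hb Exa Eyb E Hn.
  destruct (common_extension_MCE _ _ HG x y a b) as [q [e [Hq [He [Eqe Exa']]]]]; auto.
  exists q. apply restrict_MCE; auto. split; auto.
  rewrite Eqe. apply range_not_H; auto.
  destruct Hq as [Hqd _]. destruct (comp_props _ _ HG q e) as [_ [_ [Es _]]]; auto.
  rewrite <- Es, <- Exa'. exact Hn.
Qed.

Lemma restrict_Ext F l a : (forall m, F m -> dom m) -> dom l ->
  (Ext Gr l F a <-> Ext G l F a /\ ~ H (ss a)).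
Proof.
  intros HF Hl. split.
  - intros [m [Fm [[Ha Hah] [Ea Hmce]]]]. apply restrict_MCE in Hmce; auto.
    split; auto. exists m. destruct Hmce. auto.
  - intros [[m [Fm [Ha [Ea Hmce]]]] Hah]. exists m. split; auto.
    split; [split; auto|]. split; auto. apply restrict_MCE; auto. split; auto.
    destruct (comp_props _ _ HG l a) as [_ [_ [Es _]]]; auto. simpl. rewrite Es. auto.
Qed.

Lemma FE_restrict_member F v m : FEat Gr F v -> F m ->
  dom m /\ ~ H (ss m) /\ rr m = v /\ ~ Vertex Gr m.
Proof. intros [_ [_ [Hel _]]] Fm. destruct (Hel m Fm) as [[? ?] [? ?]]. auto. Qed.

Lemma FE_restrict_vertex F v : FEat Gr F v -> Vertex G v /\ ~ H v.
Proof. intros [Hv _]. apply restrict_vertex; auto. Qed.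

Lemma FE_restrict_range F v v' : FEat Gr F v -> FEat Gr F v' -> v = v'.
Proof.
  intros Hv Hv'. destruct Hv as [HvV [HFin [Hel Hex]]].
  destruct (Hex v) as [m [Fm _]].
  { apply HvV. }
  { apply restrict_vertex in HvV. apply (vertex_r _ _ HG), HvV. }
  destruct (FE_restrict_member F v' m Hv' Fm) as [_ [_ [E' _]]].
  destruct (Hel m Fm) as [_ [E _]]. simpl in E. congruence.
Qed.

Lemma FE_restrict_add F v l : FEat Gr F v -> kdom Gr l -> rr l = v -> l <> v ->
  FEat Gr (fun m => F m \/ m = l) v.
Proof.
  intros [Hv [[LF HLF] [Hel Hex]]] [Hl Hlh] Er Hne.
  split; auto. split.
  { exists (l :: LF). intro x. simpl. rewrite HLF. split; intros [Hx | Hx]; auto. }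
  split.
  - intros m [Fm | ->]; [apply Hel; auto|].
    split; [split; auto|]. split; auto.
    intro Hvl. apply Hne. rewrite <- Er. symmetry.
    apply (vertex_r _ _ HG), restrict_vertex, Hvl.
  - intros x Hx Ex. destruct (Hex x Hx Ex) as [m [Fm Hm]]. exists m; auto.
Qed.

Lemma FE_restrict_remove F v l l' : FEat Gr F v -> F l -> kdom Gr l' -> ss l = rr l' ->
  F (cp l l') -> l' <> ss l -> FEat Gr (fun m => F m /\ m <> cp l l') v.
Proof.
  intros Hfe Fl [Hl' _] El Fll' Hne. pose proof Hfe as [Hv [[LF HLF] [Hel Hex]]].
  destruct (FE_restrict_member F v l Hfe Fl) as [Hl _].
  split; auto. split.
  { exists (filter (keep (fun m => m <> cp l l')) LF). intro x.
    rewrite In_filter_keep, <- HLF. tauto. }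
  split; [intros m [Fm _]; apply Hel; auto|].
  intros x Hx Ex. destruct (Hex x Hx Ex) as [m [Fm [q Hq]]].
  destruct (classic (m = cp l l')) as [-> | Hm].
  2: { exists m. split; [split; auto | exists q; auto]. }
  exists l. split; [split; [auto | apply (comp_proper _ _ HG); auto]|].
  destruct Hx as [Hx _]. destruct (comp_props _ _ HG l l') as [Hll' _]; auto.
  apply restrict_MCE in Hq; auto.
  destruct Hq as [[Hqd [_ [[a [Ha [Ea Eqa]]] [b [Hb [Eb Eqb]]]]]] Hqh].
  destruct (comp_props _ _ HG l l') as [_ [_ [Ess _]]]; auto.
  destruct (comp_props _ _ HG l' b) as [Hl'b [Erl'b _]]; auto; [congruence|].
  apply (restrict_common_extension x l a (cp l' b)); auto; try congruence.
  rewrite <- Eqa, Eqb. apply (comp_assoc _ _ HG); auto. congruence.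
Qed.

(* A path [x] meeting [l] also meets some [l g] with [g] in a finite exhaustive set
   [F'] at [s(l)]: a common extension [x a = l b] continues along a common
   extension of [b] and [g]. *)
Lemma restrict_meets_replace F' l x q : FEat Gr F' (ss l) -> dom l -> dom x ->
  MCE Gr x l q -> exists g, F' g /\ exists q', MCE Gr x (cp l g) q'.
Proof.
  intros Hfe' Hl Hx Hq. pose proof Hfe' as [_ [_ [_ Hex']]].
  apply restrict_MCE in Hq; auto.
  destruct Hq as [[Hqd [_ [[a [Ha [Ea Eqa]]] [b [Hb [Eb Eqb]]]]]] Hqh].
  destruct (comp_props _ _ HG x a) as [_ [_ [Esxa _]]]; auto.
  destruct (comp_props _ _ HG l b) as [_ [_ [Eslb _]]]; auto.
  destruct (Hex' b) as [g [Fg [p' Hp']]].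
  { split; auto. simpl. rewrite <- Eslb, <- Eqb. auto. }
  { simpl. congruence. }
  destruct (FE_restrict_member F' _ g Hfe' Fg) as [Hg [_ [Erg _]]].
  apply restrict_MCE in Hp'; auto.
  destruct Hp' as [[Hp'd [_ [[a' [Ha' [Ea' Eqa']]] [b' [Hb' [Eb' Eqb']]]]]] Hp'h].
  destruct (comp_props _ _ HG l g) as [Hlg [_ [Eslg _]]]; auto.
  assert (Esa : ss a = rr a') by congruence.
  destruct (comp_props _ _ HG a a') as [Haa' [Eraa' _]]; auto.
  destruct (comp_props _ _ HG b a') as [_ [Erba' _]]; auto.
  destruct (comp_props _ _ HG l p') as [_ [_ [Eslp' _]]]; [auto | auto | congruence |].
  assert (Ep : cp x (cp a a') = cp l p').
  { rewrite <- (comp_assoc _ _ HG), <- Eqa, Eqb, Eqa'; auto.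
    apply (comp_assoc _ _ HG); auto. }
  assert (Ep' : cp l p' = cp (cp l g) b').
  { rewrite Eqb'. symmetry. apply (comp_assoc _ _ HG); auto. }
  exists g. split; auto.
  apply (restrict_common_extension x (cp l g) (cp a a') b'); auto; try congruence.
Qed.

Lemma FE_restrict_replace F F' v l : FEat Gr F v -> FEat Gr F' (ss l) -> F l ->
  FEat Gr (fun m => (F m /\ m <> l) \/ exists g, F' g /\ m = cp l g) v.
Proof.
  intros Hfe Hfe' Fl.
  pose proof Hfe as [Hv [[LF HLF] [Hel Hex]]].
  pose proof Hfe' as [_ [[LF' HLF'] _]].
  destruct (FE_restrict_member F v l Hfe Fl) as [Hl [Hlh [Erl Hlnv]]].
  split; auto. split.
  { exists (filter (keep (fun m => m <> l)) LF ++ map (cp l) LF'). intro x.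
    rewrite in_app_iff, In_filter_keep, in_map_iff, <- HLF. split.
    - intros [Hx | [g [Fg ->]]]; [left; auto | right; exists g; split; auto; apply HLF'; auto].
    - intros [Hx | [g [<- Fg]]]; [left; auto | right; exists g; split; auto; apply HLF'; auto]. }
  split.
  - intros m [[Fm _] | [g [Fg ->]]]; [apply Hel; auto|].
    destruct (FE_restrict_member F' _ g Hfe' Fg) as [Hg [Hgh [Erg _]]].
    destruct (comp_props _ _ HG l g) as [Hlg [Erlg [Eslg _]]]; auto.
    split; [split; simpl; [auto | rewrite Eslg; auto]|]. split; [simpl; congruence|].
    intros [_ D0]. apply Hlnv. split; [split; auto|].
    apply (comp_deg0_l _ _ HG l g); auto.
  - intros x Hx Ex. destruct (Hex x Hx Ex) as [m [Fm [q Hq]]].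
    destruct (classic (m = l)) as [-> | Hm].
    + destruct (restrict_meets_replace F' l x q) as [g [Fg Hg]]; auto; [apply Hx|].
      exists (cp l g). split; [right; exists g; auto | exact Hg].
    + exists m. split; [left; auto | exists q; auto].
Qed.

(* If [l mu] meets [m], then [l] meets [m] in some [l z] with [z] in the
   restriction, and [mu] meets [z]: both minimal common extensions are cut out of
   the given one by [common_extension_MCE]. *)
Lemma restrict_meets_ext l mu m P : dom l -> kdom Gr mu -> ss l = rr mu -> dom m ->
  MCE Gr (cp l mu) m P ->
  exists z, (kdom Gr z /\ ss l = rr z /\ MCE Gr l m (cp l z)) /\ exists q, MCE Gr mu z q.
Proof.
  intros Hl [Hmu Hmuh] Emu Hm HP.
  destruct (comp_props _ _ HG l mu) as [Hlmu [Erlmu [Eslmu _]]]; auto.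
  apply restrict_MCE in HP; auto.
  destruct HP as [[HPd [_ [[ga [Hga [Ega EqP1]]] [be [Hbe [Ebe EqP2]]]]]] HPh].
  rewrite Eslmu in Ega.
  destruct (comp_props _ _ HG mu ga) as [Hmuga [Ermuga [Esmuga _]]]; auto.
  assert (EP : P = cp l (cp mu ga)).
  { rewrite EqP1. apply (comp_assoc _ _ HG); auto. }
  destruct (common_extension_MCE _ _ HG l m (cp mu ga) be)
    as [q [e [Hq [He [Eqe Eq]]]]]; auto; try congruence.
  pose proof Hq as [Hqd [_ [[z [Hz [Ez Eqz]]] _]]].
  destruct (comp_props _ _ HG l z) as [_ [_ [Eslz _]]]; auto.
  destruct (comp_props _ _ HG q e) as [_ [_ [Esqe _]]]; auto.
  destruct (comp_props _ _ HG z e) as [Hze [Erze _]]; auto; [congruence|].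
  assert (Emz : cp mu ga = cp z e).
  { apply (cancel_left _ _ HG l); auto; try congruence.
    rewrite Eq, Eqz. apply (comp_assoc _ _ HG); auto. congruence. }
  assert (Hzh : ~ H (ss z)).
  { rewrite <- Eslz, <- Eqz, Eqe. apply range_not_H; auto.
    rewrite <- Esqe, <- Eq, <- EP. exact HPh. }
  exists z. split.
  { split; [split; auto|]. split; auto.
    apply restrict_MCE; auto. rewrite <- Eqz. split; auto. rewrite Eqz, Eslz. exact Hzh. }
  apply (restrict_common_extension mu z ga e); auto; try congruence.
  rewrite Esmuga. rewrite EP in HPh.
  destruct (comp_props _ _ HG l (cp mu ga)) as [_ [_ [Es _]]]; auto; congruence.
Qed.

(* (S2): the extensions [Ext(l; F)] of a path [l] not in [F Lambda] form a finite
   exhaustive set at [s(l)] (finiteness is supplied separately). *)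
Lemma FE_restrict_ext F v l : finite_set (Ext Gr l F) -> FEat Gr F v ->
  kdom Gr l -> rr l = v ->
  ~ (exists m a, F m /\ kdom Gr a /\ ss m = rr a /\ l = cp m a) ->
  FEat Gr (Ext Gr l F) (ss l).
Proof.
  intros Hfin Hfe [Hl Hlh] Er Hnot. pose proof Hfe as [_ [_ [_ Hex]]].
  split; [apply restrict_vertex; split; [apply (rs_vertex _ _ HG); auto | auto]|].
  split; auto. split.
  - intros a Xa. pose proof Xa as [m [Fm [Ha [Ea Hmce]]]].
    split; auto. split; [simpl; auto|]. intro Hva.
    apply restrict_vertex in Hva. destruct Hva as [Hva _].
    simpl in Ea. rewrite <- (vertex_r _ _ HG a Hva), <- Ea in Hmce.
    simpl in Hmce. rewrite (comp_id_r _ _ HG) in Hmce; auto.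
    destruct Hmce as [_ [_ [_ [b [Hb [Eb Eqb]]]]]]. apply Hnot. exists m, b. auto.
  - intros mu Hmu Emu. simpl in Emu. pose proof Hmu as [Hmud Hmuh].
    destruct (comp_props _ _ HG l mu) as [Hlmu [Erlmu [Eslmu _]]]; auto.
    destruct (Hex (cp l mu)) as [m [Fm [P HP]]].
    { split; auto. simpl. rewrite Eslmu. auto. }
    { simpl. congruence. }
    destruct (FE_restrict_member F v m Hfe Fm) as [Hm _].
    destruct (restrict_meets_ext l mu m P) as [z [Xz Hq]]; auto.
    exists z. split; [exists m; split; auto | exact Hq].
Qed.

Variable calE : (kM G -> Prop) -> Prop.
Hypothesis calE_satiated : satiated G calE.
Hypothesis H_saturated : E_saturated G calE H.

(* A path [l] avoiding [H] and not in [E Lambda] meets [E \ E H]: otherwise every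
   member of [Ext(l; E)], itself in [calE], has source in [H], and saturation puts
   [s(l)] into [H]. *)
Lemma restrict_meets_of_E E v l : calE E -> FEat G E v -> dom l -> ~ H (ss l) ->
  rr l = v -> ~ (exists m a, E m /\ dom a /\ ss m = rr a /\ l = cp m a) ->
  exists m, (E m /\ ~ H (ss m)) /\ exists q, MCE Gr l m q.
Proof.
  intros HE Hfe Hl Hlh Er Hnin. pose proof Hfe as [_ [_ [Hel _]]].
  destruct calE_satiated as [HsFE [_ [HS2 _]]].
  assert (HX : calE (Ext G l E)) by (eapply HS2; eauto).
  destruct (HsFE _ HX) as [w Hw].
  assert (Ew : w = ss l).
  { destruct Hw as [Hwv [_ [Hwel Hwex]]].
    destruct (Hwex w) as [a [Xa _]]; [apply Hwv | apply (vertex_r _ _ HG); auto |].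
    destruct (Hwel a Xa) as [_ [Ea' _]]. destruct Xa as [m [_ [_ [Ea _]]]]. congruence. }
  subst w.
  destruct (classic (exists a, Ext G l E a /\ ~ H (ss a))) as [[a [Xa Ha']] | Hno].
  - destruct Xa as [m [Em [Ha [Ea Hmce]]]].
    destruct (Hel m Em) as [Hm _].
    destruct Hmce as [_ [_ [_ [b [Hb [Eb Eqb]]]]]].
    destruct (comp_props _ _ HG l a) as [_ [_ [Esla _]]]; auto.
    destruct (comp_props _ _ HG m b) as [_ [_ [Esmb _]]]; auto.
    exists m. split.
    + split; auto. rewrite Eb. apply range_not_H; auto. congruence.
    + apply (restrict_common_extension l m a b); auto. congruence.
  - exfalso. apply Hlh. apply (H_saturated (Ext G l E) (ss l)); auto.
    intros a Xa. apply NNPP. intro Hna. apply Hno. exists a; auto.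
Qed.

Lemma FE_restrict_of_E E v : calE E -> FEat G E v -> ~ H v ->
  FEat Gr (fun m => E m /\ ~ H (ss m)) v.
Proof.
  intros HE Hfe Hnv. pose proof Hfe as [Hv [[LE HLE] [Hel Hex]]].
  split; [apply restrict_vertex; auto|]. split.
  { exists (filter (keep (fun m => ~ H (ss m))) LE). intro m.
    rewrite In_filter_keep, <- HLE. tauto. }
  split.
  { intros m [Em Hm]. destruct (Hel m Em) as [Hd [Er Hnvm]].
    split; [split; auto|]. split; auto.
    intro Hvm. apply Hnvm, restrict_vertex, Hvm. }
  intros l [Hl Hlh] Er. simpl in Er.
  destruct (classic (exists m a, E m /\ dom a /\ ss m = rr a /\ l = cp m a))
    as [[m [a [Em [Ha [Ema El]]]]] | Hnin].
  - destruct (Hel m Em) as [Hm _].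
    destruct (comp_props _ _ HG m a) as [_ [_ [Es _]]]; auto.
    exists m. split.
    + split; auto. rewrite Ema. apply range_not_H; auto. congruence.
    + apply (restrict_common_extension l m (ss l) a);
        rewrite ?(r_s _ _ HG), ?(comp_id_r _ _ HG); auto. apply (dom_s _ _ HG); auto.
  - apply (restrict_meets_of_E E v l); auto.
Qed.

End Restriction.

Lemma unimodular_conj (x : Cplx) : Cmod x = 1%R -> Cmul x (Cconj x) = Defs.C1.
Proof.
  unfold Cmod. intro H. destruct x as [a b]; simpl in *.
  assert (Hp : (0 <= a * a + b * b)%R) by nra.
  pose proof (sqrt_sqrt _ Hp) as E. rewrite H in E.
  unfold Cmul, Cconj, Defs.C1; simpl. f_equal; nra.
Qed.

Section TCK.
Variable k : nat.
Variable G : kg.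
Hypothesis HG : is_kgraph G k.
Variable c : kM G -> kM G -> Cplx.
Hypothesis Hc : cocycle G c.
Variable A : CStar.
Variable s : kM G -> A.
Hypothesis Ht : TCK_family G A c s.

Local Open Scope cs_scope.
Notation dom := (kdom G).
Notation rr := (kr G).
Notation ss := (ks G).
Notation cp := (kcomp G).
Notation dg := (kd G).
Notation st := cs_star.
Notation p := (proj_of G A s).

Lemma tck_vertex v : Vertex G v -> s v * s v = s v /\ st (s v) = s v.
Proof. destruct Ht as [H _]. apply H. Qed.
Lemma tck_comp m n : dom m -> dom n -> ss m = rr n ->
  s m * s n = cs_scal (c m n) (s (cp m n)).
Proof. destruct Ht as [_ [_ [H _]]]. apply H. Qed.
Lemma tck_source l : dom l -> st (s l) * s l = s (ss l).
Proof. destruct Ht as [_ [_ [_ [H _]]]]. apply H. Qed.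
Lemma tck_MCE m n : dom m -> dom n -> sum_over G A (MCE G m n) p (p m * p n).
Proof. destruct Ht as [_ [_ [_ [_ H]]]]. apply H. Qed.

Lemma cocycle_r l : dom l -> c (rr l) l = Defs.C1.
Proof. destruct Hc as [_ [_ H]]. apply H. Qed.
Lemma cocycle_s l : dom l -> c l (ss l) = Defs.C1.
Proof. destruct Hc as [_ [_ H]]. apply H. Qed.
Lemma cocycle_mod m n : dom m -> dom n -> ss m = rr n -> Cmod (c m n) = 1%R.
Proof. destruct Hc as [H _]. apply H. Qed.

Lemma vertex_selfadjoint v : Vertex G v -> st (s v) = s v. Proof. apply tck_vertex. Qed.
Lemma s_rl l : dom l -> s (rr l) * s l = s l.
Proof.
  intro Hl. rewrite tck_comp; [| apply (dom_r _ _ HG) | | apply (s_r _ _ HG)]; auto.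
  rewrite cocycle_r, cs_scal1, (comp_id_l _ _ HG); auto.
Qed.
Lemma s_ls l : dom l -> s l * s (ss l) = s l.
Proof.
  intro Hl. rewrite tck_comp; [| | apply (dom_s _ _ HG) | symmetry; apply (r_s _ _ HG)]; auto.
  rewrite cocycle_s, cs_scal1, (comp_id_r _ _ HG); auto.
Qed.
Lemma st_rl l : dom l -> st (s l) * s (rr l) = st (s l).
Proof.
  intro Hl. rewrite <- (vertex_selfadjoint (rr l)) by (apply (rs_vertex _ _ HG); auto).
  rewrite <- starM, s_rl; auto.
Qed.
Lemma st_ls l : dom l -> s (ss l) * st (s l) = st (s l).
Proof.
  intro Hl. rewrite <- (vertex_selfadjoint (ss l)) by (apply (rs_vertex _ _ HG); auto).
  rewrite <- starM, s_ls; auto.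
Qed.

Lemma p_def l : p l = s l * st (s l). Proof. reflexivity. Qed.
Lemma p_star l : st (p l) = p l.
Proof. rewrite p_def, starM, starK. reflexivity. Qed.
Lemma p_s l : dom l -> p l * s l = s l.
Proof. intro. rewrite p_def, <- mulA, tck_source, s_ls; auto. Qed.
Lemma st_p l : dom l -> st (s l) * p l = st (s l).
Proof. intro. rewrite p_def, mulA, tck_source, st_ls; auto. Qed.
Lemma p_idem l : dom l -> p l * p l = p l.
Proof. intro. rewrite (p_def l) at 2. rewrite mulA, p_s; auto. Qed.
Lemma v_p m : dom m -> s (rr m) * p m = p m.
Proof. intro. rewrite p_def, mulA, s_rl; auto. Qed.
Lemma p_v m : dom m -> p m * s (rr m) = p m.
Proof. intro. rewrite p_def, <- mulA, st_rl; auto. Qed.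

Definition sum_proj (L : list (kM G)) : A := fold_right (fun m acc => p m + acc) 0 L.

Lemma sum_proj_selfadjoint L : st (sum_proj L) = sum_proj L.
Proof. induction L; simpl. apply star0. rewrite cs_starD, IHL, p_star. reflexivity. Qed.

(* By (TCK4), [p m p n] is a self-adjoint sum over MCE(m, n): the projections
   commute, are orthogonal when MCE(m, n) is empty, and [p m <= p n] when
   MCE(m, n) = {m}. *)
Lemma p_comm m n : dom m -> dom n -> p m * p n = p n * p m.
Proof.
  intros. destruct (tck_MCE m n) as [L [_ [_ E]]]; auto.
  change (fold_right (fun m acc => p m + acc) 0 L) with (sum_proj L) in E.
  rewrite E, <- sum_proj_selfadjoint, <- E, starM, !p_star. reflexivity.
Qed.
Lemma p_orth m n : dom m -> dom n -> (forall x, ~ MCE G m n x) -> p m * p n = 0.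
Proof.
  intros Hm Hn Hno. destruct (tck_MCE m n) as [L [_ [He E]]]; auto.
  destruct L as [|x L]; [exact E|]. exfalso. apply (Hno x), He. left; auto.
Qed.
Lemma p_single m n : dom m -> dom n -> (forall q, MCE G m n q <-> q = m) -> p m * p n = p m.
Proof.
  intros Hm Hn Hq. destruct (tck_MCE m n) as [L [Hnd [He E]]]; auto.
  assert (HL : forall x, In x L <-> x = m) by (intro x; rewrite <- He; apply Hq).
  destruct L as [|x [|y L]].
  - exfalso. apply (HL m). reflexivity.
  - rewrite E. simpl. rewrite addr0. f_equal. apply HL. left; auto.
  - exfalso. inversion Hnd as [|? ? Hx _]. apply Hx. left.
    rewrite (proj1 (HL x)), (proj1 (HL y)); simpl; auto.
Qed.

(* [p (l g) = s l p g s l^*], the cocycle factors cancelling. *)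
Lemma p_comp l g : dom l -> dom g -> ss l = rr g -> p (cp l g) = s l * p g * st (s l).
Proof.
  intros. rewrite !p_def.
  assert (E : s l * (s g * st (s g)) * st (s l) = (s l * s g) * st (s l * s g)).
  { rewrite starM, !mulA. reflexivity. }
  rewrite E, tck_comp, cs_starZ, scal_mul2, unimodular_conj, cs_scal1; auto.
  apply cocycle_mod; auto.
Qed.

(* The defect factor [s v - p m] and the defect product of a list [L] of paths
   with range [v]; for [L] enumerating [E] the latter is [Delta(s)^E]. *)
Definition dfac (v m : kM G) : A := s v + - p m.
Fixpoint dprod (v : kM G) (L : list (kM G)) : A :=
  match L with nil => s v | m :: L' => dfac v m * dprod v L' end.

Definition rpath (v m : kM G) : Prop := dom m /\ rr m = v.

Lemma dfac_mul v m n : Vertex G v -> rpath v m -> rpath v n ->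
  dfac v m * dfac v n = s v + - p n + (- p m + p m * p n).
Proof.
  intros Hv [Hm Em] [Hn En]. unfold dfac.
  rewrite mulDl, !mulDr, (proj1 (tck_vertex v Hv)), mulrN, mulNr, mulNr, mulrN, oppK.
  assert (E1 : s v * p n = p n) by (rewrite <- En; apply v_p; auto).
  assert (E2 : p m * s v = p m) by (rewrite <- Em; apply p_v; auto).
  rewrite E1, E2, !addrA. reflexivity.
Qed.

Lemma dfac_comm v m n : Vertex G v -> rpath v m -> rpath v n ->
  dfac v m * dfac v n = dfac v n * dfac v m.
Proof.
  intros Hv Hm Hn. rewrite !dfac_mul; auto.
  rewrite p_comm by (apply Hm || apply Hn). rewrite add_swap_middle. reflexivity.
Qed.

Lemma dfac_idem v m : Vertex G v -> rpath v m -> dfac v m * dfac v m = dfac v m.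
Proof. intros Hv Hm. rewrite dfac_mul, p_idem, addNr, addr0; auto. apply Hm. Qed.

Lemma vertex_dfac v m : Vertex G v -> rpath v m -> s v * dfac v m = dfac v m.
Proof.
  intros Hv [Hm Em]. unfold dfac. rewrite mulDr, mulrN, (proj1 (tck_vertex v Hv)).
  rewrite <- Em at 2. rewrite v_p; auto.
Qed.

Lemma dfac_vertex v m : Vertex G v -> rpath v m -> dfac v m * s v = dfac v m.
Proof.
  intros Hv [Hm Em]. unfold dfac. rewrite mulDl, mulNr, (proj1 (tck_vertex v Hv)).
  rewrite <- Em at 2. rewrite p_v; auto.
Qed.

Lemma dfac_proj_comm v l m : Vertex G v -> rpath v l -> rpath v m ->
  dfac v m * p l = p l * dfac v m.
Proof.
  intros Hv [Hl El] [Hm Em]. unfold dfac. rewrite mulDl, mulDr, mulNr, mulrN.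
  rewrite (p_comm m l); auto.
  rewrite <- El at 1. rewrite v_p; auto. rewrite <- El. rewrite p_v; auto.
Qed.

(* The range projection of [l l'] lies below that of [l]. *)
Lemma dfac_absorb v l l' : Vertex G v -> rpath v l -> dom l' -> ss l = rr l' ->
  dfac v (cp l l') * dfac v l = dfac v l.
Proof.
  intros Hv [Hl El] Hl' E. destruct (comp_props _ _ HG l l') as [Hll' [Er _]]; auto.
  rewrite dfac_mul; [| auto | split; congruence | split; auto].
  rewrite p_single; [rewrite addNr, addr0; reflexivity | auto | auto |].
  apply (MCE_extension _ _ HG); auto.
Qed.

Lemma vertex_dprod v L : Vertex G v -> Forall (rpath v) L -> s v * dprod v L = dprod v L.
Proof.
  intros Hv HL. destruct L as [|m L]; simpl; [apply tck_vertex; auto|].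
  rewrite mulA, vertex_dfac; auto. inversion HL; auto.
Qed.

Lemma prod_list_dprod v L : Vertex G v -> Forall (rpath v) L ->
  prod_list G A (dfac v) (s v) L = dprod v L.
Proof.
  intros Hv HL. induction L as [|m L IH]; [reflexivity|].
  inversion HL as [|? ? Hm HL']; subst. destruct L as [|m' L].
  - simpl. rewrite dfac_vertex; auto.
  - change (prod_list G A (dfac v) (s v) (m :: m' :: L))
      with (dfac v m * prod_list G A (dfac v) (s v) (m' :: L)).
    rewrite IH; auto.
Qed.

Lemma dprod_app v L1 L2 : Vertex G v -> Forall (rpath v) L2 ->
  dprod v (L1 ++ L2) = dprod v L1 * dprod v L2.
Proof.
  intros Hv HF. induction L1 as [|m L1 IH]; simpl.
  - rewrite vertex_dprod; auto.
  - rewrite IH, mulA. reflexivity.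
Qed.

(* The defect product depends only on the set of paths enumerated: factors commute
   and are idempotent. *)
Lemma dprod_perm v L L' : Vertex G v -> Permutation L L' -> Forall (rpath v) L ->
  dprod v L = dprod v L'.
Proof.
  intros Hv HP. induction HP as [| x L L' HP IH | x y L | L L' L'' HP1 IH1 HP2 IH2];
    intro HF; simpl; auto.
  - inversion HF; subst. rewrite IH; auto.
  - inversion HF as [|? ? Hy HF']; subst. inversion HF'; subst.
    rewrite !mulA, dfac_comm; auto.
  - rewrite IH1, IH2; auto. rewrite Forall_forall in *. intros z Hz.
    apply HF, (Permutation_in z (Permutation_sym HP1)), Hz.
Qed.

Lemma dprod_dup v x L : Vertex G v -> In x L -> Forall (rpath v) L ->
  dprod v (x :: L) = dprod v L.
Proof.
  intros Hv Hin HF. apply in_split in Hin. destruct Hin as [l1 [l2 ->]].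
  change (dprod v (x :: l1 ++ x :: l2)) with (dfac v x * dprod v (l1 ++ x :: l2)).
  rewrite (dprod_perm v (l1 ++ x :: l2) (x :: l1 ++ l2)); auto;
    [| apply Permutation_sym, Permutation_middle].
  simpl. rewrite mulA, dfac_idem; auto.
  rewrite Forall_forall in HF. apply HF, in_or_app. right; left; auto.
Qed.

Lemma dprod_nodup v L : Vertex G v -> Forall (rpath v) L ->
  exists L0, NoDup L0 /\ (forall x, In x L <-> In x L0) /\ dprod v L = dprod v L0.
Proof.
  intros Hv. induction L as [|a L IH]; intro HF.
  - exists nil. repeat split; auto. constructor.
  - inversion HF as [|? ? Ha HF']; subst. destruct IH as [L0 [Hn [He EQ]]]; auto.
    destruct (classic (In a L0)) as [Hin | Hnin].
    + exists L0. split; auto. split.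
      * intro x. simpl. rewrite He. split; [intros [<- |]|]; auto.
      * simpl. rewrite EQ. apply dprod_dup; auto.
        apply Forall_forall. intros z Hz. rewrite Forall_forall in HF'. apply HF', He, Hz.
    + exists (a :: L0). split; [constructor; auto|]. split.
      * intro x. simpl. rewrite He. tauto.
      * simpl. rewrite EQ; auto.
Qed.

Lemma dprod_set v L L' : Vertex G v -> Forall (rpath v) L ->
  (forall x, In x L <-> In x L') -> dprod v L = dprod v L'.
Proof.
  intros Hv HF He.
  assert (HF' : Forall (rpath v) L').
  { rewrite Forall_forall in *. intros z Hz. apply HF, He, Hz. }
  destruct (dprod_nodup v L Hv HF) as [L0 [Hn0 [He0 E0]]].
  destruct (dprod_nodup v L' Hv HF') as [L1 [Hn1 [He1 E1]]].
  rewrite E0, E1. apply dprod_perm; auto.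
  - apply NoDup_Permutation; auto. intro x. rewrite <- He0, <- He1. auto.
  - rewrite Forall_forall in *. intros z Hz. apply HF, He0, Hz.
Qed.

Lemma dprod_remove v l L : Vertex G v -> Forall (rpath v) L -> In l L ->
  dprod v (filter (keep (fun m => m <> l)) L) * dfac v l = dprod v L.
Proof.
  intros Hv HF Hl. rewrite Forall_forall in HF.
  assert (HFm : Forall (rpath v) (filter (keep (fun m => m <> l)) L)).
  { apply Forall_forall. intros x Hx. apply In_filter_keep in Hx. apply HF, Hx. }
  replace (dfac v l) with (dprod v (l :: nil)) by (simpl; apply dfac_vertex; auto).
  rewrite <- dprod_app; [| auto | constructor; auto].
  apply dprod_set.
  - auto.
  - apply Forall_app. split; auto.
  - intro x. rewrite in_app_iff, In_filter_keep. simpl. split.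
    + intros [[Hx _] | [<- | []]]; auto.
    + intro Hx. destruct (classic (x = l)) as [-> | Hxl]; auto.
Qed.

Lemma dprod_map_comp l L : dom l -> Forall (rpath (ss l)) L ->
  dprod (rr l) (map (cp l) L) = dfac (rr l) l + s l * dprod (ss l) L * st (s l).
Proof.
  intros Hl HF. assert (Hw : Vertex G (ss l)) by (apply (rs_vertex _ _ HG); auto).
  assert (Hv : Vertex G (rr l)) by (apply (rs_vertex _ _ HG); auto).
  induction L as [|g L IH]; simpl.
  - unfold dfac. rewrite s_ls; auto. rewrite <- p_def, <- addrA, addNr, addr0. reflexivity.
  - inversion HF as [|? ? [Hg Eg] HF']; subst. rewrite IH; auto.
    set (X := s l * dprod (ss l) L * st (s l)).
    unfold dfac at 1. rewrite p_comp; auto.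
    assert (E1 : s (rr l) * dfac (rr l) l = dfac (rr l) l)
      by (apply vertex_dfac; auto; split; auto).
    assert (E2 : s (rr l) * X = X) by (unfold X; rewrite !mulA, s_rl; auto).
    assert (E3 : s l * p g * st (s l) * dfac (rr l) l = 0).
    { unfold dfac. rewrite <- mulA, mulDr, mulrN, st_rl, st_p, addrN, mulr0; auto. }
    assert (E4 : s l * p g * st (s l) * X = s l * (p g * dprod (ss l) L) * st (s l)).
    { unfold X. rewrite <- !mulA. f_equal. rewrite !mulA. f_equal. rewrite <- !mulA.
      rewrite (mulA (st (s l)) (s l)), tck_source, vertex_dprod; auto. }
    rewrite mulDl, !mulDr, E1, E2, mulNr, mulNr, E3, E4, opp0, add0r, <- addrA.
    f_equal. unfold dfac, X. rewrite mulDl, mulNr, vertex_dprod, mulDr, mulDl, mulrN, mulNr; auto.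
Qed.

Lemma conj_dfac l m : dom l ->
  st (s l) * dfac (rr l) m * s l = s (ss l) + - (st (s l) * p m * s l).
Proof.
  intro Hl. unfold dfac. rewrite mulDr, mulDl, st_rl, tck_source, mulrN, mulNr; auto.
Qed.

Lemma conj_proj l m (M : list (kM G)) (ch : kM G -> kM G) : dom l -> dom m ->
  p l * p m = sum_proj M ->
  (forall q, In q M -> dom (ch q) /\ ss l = rr (ch q) /\ q = cp l (ch q)) ->
  st (s l) * p m * s l = sum_proj (map ch M).
Proof.
  intros Hl Hm E Hch. rewrite <- (st_p l) at 1 by auto. rewrite <- (mulA (st (s l))), E.
  unfold sum_proj. rewrite mul_sum_l, mul_sum_r.
  clear E. induction M as [|q M IH]; simpl; [reflexivity|].
  rewrite IH by (intros; apply Hch; right; auto).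
  destruct (Hch q (or_introl eq_refl)) as [Ha [Ea Eq]]. f_equal.
  set (a := ch q) in *. rewrite Eq, p_comp; auto. rewrite !mulA, tck_source; auto.
  rewrite <- !mulA, tck_source; auto. rewrite Ea, p_v, v_p; auto.
Qed.

Lemma vertex_sum_proj w L : Forall (rpath w) L -> s w * sum_proj L = sum_proj L.
Proof.
  intro HF. unfold sum_proj. rewrite mul_sum_l. induction L as [|a L IH]; simpl; auto.
  inversion HF as [|? ? [Ha Ea] HF']; subst. rewrite IH, v_p; auto.
Qed.

Lemma orth_sum_proj a L : (forall b, In b L -> p a * p b = 0) -> p a * sum_proj L = 0.
Proof.
  intro Ho. unfold sum_proj. rewrite mul_sum_l. induction L as [|b L IH]; simpl; auto.
  rewrite Ho, add0r; [apply IH; intros; apply Ho; right; auto | left; auto].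
Qed.

Lemma dprod_orth w L : Vertex G w -> Forall (rpath w) L -> NoDup L ->
  (forall a b, In a L -> In b L -> a <> b -> p a * p b = 0) ->
  s w + - sum_proj L = dprod w L.
Proof.
  intros Hw HF Hn Ho. induction L as [|a L IH]; simpl.
  - unfold sum_proj; simpl. rewrite opp0, addr0. reflexivity.
  - inversion HF as [|? ? Ga HF']; subst. inversion Hn as [|? ? Hna Hn']; subst.
    destruct Ga as [Ha Ea]. rewrite <- IH; auto; [| intros; apply Ho; auto; right; auto].
    assert (Epa : p a * s w = p a) by (rewrite <- Ea; apply p_v; auto).
    assert (E0 : p a * sum_proj L = 0).
    { apply orth_sum_proj. intros b Hb. apply Ho; [left; auto | right; auto |].
      intros ->. contradiction. }
    unfold dfac. rewrite mulDl, !mulDr, (proj1 (tck_vertex w Hw)).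
    rewrite ?mulNr, ?mulrN, ?oppK, vertex_sum_proj, Epa, E0, addr0, oppD; auto.
    rewrite <- !addrA. f_equal. apply addrC.
Qed.

Lemma conj_dprod_cons l m L : dom l -> rpath (rr l) m -> Forall (rpath (rr l)) L ->
  st (s l) * dprod (rr l) (m :: L) * s l =
  (st (s l) * dfac (rr l) m * s l) * (st (s l) * dprod (rr l) L * s l).
Proof.
  intros Hl Hm HL. assert (Hv : Vertex G (rr l)) by (apply (rs_vertex _ _ HG); auto).
  transitivity (st (s l) * (p l * dfac (rr l) m) * dprod (rr l) L * s l).
  - simpl. rewrite (mulA (st (s l)) (p l)), st_p, !mulA; auto.
  - rewrite <- dfac_proj_comm, p_def, !mulA; auto. split; auto.
Qed.

Lemma conj_vertex l : dom l -> st (s l) * s (rr l) * s l = s (ss l).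
Proof. intro Hl. rewrite st_rl, tck_source; auto. Qed.

(* [s_l^* (s_v - p_m) s_l] is the defect product at [s(l)] of the paths [a] with
   [l a] in MCE(l, m): these have equal degrees, hence orthogonal projections. *)
Lemma conj_dfac_MCE l m : dom l -> dom m ->
  exists C, (forall a, In a C <-> dom a /\ ss l = rr a /\ MCE G l m (cp l a)) /\
    Forall (rpath (ss l)) C /\ st (s l) * dfac (rr l) m * s l = dprod (ss l) C.
Proof.
  intros Hl Hm. destruct (tck_MCE l m Hl Hm) as [M [HnM [HeM EM]]].
  set (ch := fun q => epsilon (inhabits l) (fun a => dom a /\ ss l = rr a /\ q = cp l a)).
  assert (Hch : forall q, In q M -> dom (ch q) /\ ss l = rr (ch q) /\ q = cp l (ch q)).
  { intros q Hq. apply HeM in Hq. destruct Hq as [_ [_ [[a Ha] _]]].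
    apply epsilon_spec. exists a. exact Ha. }
  assert (HC : Forall (rpath (ss l)) (map ch M)).
  { apply Forall_forall. intros a Ha. apply in_map_iff in Ha.
    destruct Ha as [q [<- Hq]]. destruct (Hch q Hq) as [? [? _]]. split; auto. }
  exists (map ch M). split; [|split; [exact HC|]].
  - intro a. rewrite in_map_iff. split.
    + intros [q [<- Hq]]. destruct (Hch q Hq) as [Ha [Ea Eq]].
      split; auto. split; auto. rewrite <- Eq. apply HeM, Hq.
    + intros [Ha [Ea Hq]]. exists (cp l a). apply HeM in Hq. split; auto.
      destruct (Hch _ Hq) as [Ha' [Ea' Eq']].
      symmetry. apply (cancel_left _ _ HG l); auto.
  - rewrite conj_dfac, (conj_proj l m M ch); auto.
    apply dprod_orth; auto.
    + apply (rs_vertex _ _ HG); auto.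
    + apply NoDup_map_NoDup_ForallPairs; auto. intros q q' Hq Hq' E.
      destruct (Hch q Hq) as [_ [_ Eq]]. destruct (Hch q' Hq') as [_ [_ Eq']]. congruence.
    + intros a b Ha Hb Hab. apply in_map_iff in Ha, Hb.
      destruct Ha as [q [<- Hq]]. destruct Hb as [q' [<- Hq']].
      destruct (Hch q Hq) as [Ha [Ea Eq]]. destruct (Hch q' Hq') as [Hb [Eb Eq']].
      apply p_orth; auto. apply (MCE_same_degree _ _ HG); auto.
      apply HeM in Hq. apply HeM in Hq'.
      destruct Hq as [_ [Dq _]]. destruct Hq' as [_ [Dq' _]].
      apply (dadd_cancel (dg l)).
      destruct (comp_props _ _ HG l (ch q)) as [_ [_ [_ D1]]]; auto.
      destruct (comp_props _ _ HG l (ch q')) as [_ [_ [_ D2]]]; auto.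
      rewrite <- D1, <- D2, <- Eq, <- Eq'. congruence.
Qed.

Lemma conj_dprod_Ext l LF : dom l -> Forall (rpath (rr l)) LF ->
  exists C, (forall a, In a C <-> Ext G l (fun m => In m LF) a) /\
    Forall (rpath (ss l)) C /\ st (s l) * dprod (rr l) LF * s l = dprod (ss l) C.
Proof.
  intros Hl. induction LF as [|m LF IH]; intro HF.
  - exists nil. split; [|split; [constructor | apply conj_vertex; auto]].
    intro a. split; [intros [] | intros [m [[] _]]].
  - inversion HF as [|? ? Hm HF']; subst.
    destruct (conj_dfac_MCE l m) as [Cm [HCm [HFm Em]]]; [auto | apply Hm |].
    destruct (IH HF') as [C [HC [HFC EC]]].
    exists (Cm ++ C). split; [|split; [apply Forall_app; auto|]].
    + intro a. rewrite in_app_iff, HCm, HC. split.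
      * intros [[Ha [Ea Hq]] | [m' [Hm' Xa]]]; [exists m; simpl; auto|].
        exists m'. split; [right; auto | exact Xa].
      * intros [m' [[<- | Hm'] Xa]]; [left; apply Xa | right; exists m'; auto].
    + rewrite conj_dprod_cons, Em, EC, dprod_app; auto.
      apply (rs_vertex _ _ HG); auto.
Qed.


Lemma FE_rpath E v L : FEat G E v -> (forall m, E m <-> In m L) -> Forall (rpath v) L.
Proof.
  intros [_ [_ [Hel _]]] HL. apply Forall_forall. intros m Hm.
  apply HL in Hm. destruct (Hel m Hm) as [? [? _]]. split; auto.
Qed.

Lemma FE_restrict_rpath (H : kM G -> Prop) F v L :
  FEat (restrict G H) F v -> (forall m, F m <-> In m L) -> Forall (rpath v) L.
Proof.
  intros [_ [_ [Hel _]]] HL. apply Forall_forall. intros m Hm.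
  apply HL in Hm. destruct (Hel m Hm) as [[? _] [? _]]. split; auto.
Qed.

Section Ideal.
Variable I : A -> Prop.
Hypothesis I_ideal : closed_ideal A I.

Local Notation H_I := (H_of G A s I).
Local Notation Gr := (restrict G H_I).
Local Notation B_I := (B_of G A s I H_I).

Lemma ideal_proj l : dom l -> I (s (ss l)) -> I (p l).
Proof.
  intros Hl Is. rewrite p_def, <- s_ls; auto.
  apply (ideal_mul_r I I_ideal), (ideal_mul_l I I_ideal), Is.
Qed.

(* [s (s l) = s l^* s (r l) s l]. *)
Lemma H_I_hereditary : hereditary G H_I.
Proof.
  intros l Hl [Hv Ir]. split; [apply (rs_vertex _ _ HG); auto|].
  rewrite <- tck_source, <- s_rl; auto.
  apply (ideal_mul_l I I_ideal), (ideal_mul_r I I_ideal), Ir.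
Qed.

Lemma dprod_keep_mod v (P : kM G -> Prop) L : Vertex G v -> Forall (rpath v) L ->
  (forall m, In m L -> ~ P m -> I (p m)) -> eqI I (dprod v L) (dprod v (filter (keep P) L)).
Proof.
  intros Hv. induction L as [|m L IH]; intros HF HP; simpl.
  - apply eqI_refl; auto.
  - inversion HF as [|? ? Hm HF']; subst.
    assert (IH' := IH HF' (fun z Hz => HP z (or_intror Hz))).
    unfold keep at 1. destruct (excluded_middle_informative (P m)) as [Pm | nPm].
    + apply (eqI_mul_l I I_ideal); auto.
    + apply (eqI_trans I I_ideal _ (dprod v L)); auto. unfold eqI, dfac.
      rewrite mulDl, vertex_dprod, mulNr, addrC, addrA, addNr, add0r; auto.
      apply (ideal_opp I I_ideal), (ideal_mul_r I I_ideal), HP; auto. left; auto.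
Qed.

Lemma dprod_restrict_mod E v L : FEat G E v -> (forall m, E m <-> In m L) ->
  eqI I (dprod v L) (dprod v (filter (keep (fun m => ~ H_I (ss m))) L)).
Proof.
  intros Hfe HL. apply dprod_keep_mod; [apply Hfe | apply (FE_rpath E); auto |].
  intros m Hm Hs. apply NNPP in Hs. apply ideal_proj; [| apply Hs].
  apply HL in Hm. apply Hfe, Hm.
Qed.

Lemma B_I_dprod F v L : B_I F -> FEat Gr F v -> (forall m, F m <-> In m L) ->
  I (dprod v L).
Proof.
  intros [_ [v' [Hfe' [x [[L0 [Hn [He Ex]]] Ix]]]]] Hfe HL.
  assert (v' = v) by (eapply (FE_restrict_range _ _ HG); eauto). subst v'.
  destruct (FE_restrict_vertex _ _ HG _ _ _ Hfe) as [Hv _].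
  assert (HF0 := FE_restrict_rpath _ F v L0 Hfe He).
  rewrite (dprod_set v L L0); auto.
  - replace (dprod v L0) with x; auto. rewrite Ex. apply prod_list_dprod; auto.
  - eapply FE_restrict_rpath; eauto.
  - intro y. rewrite <- HL, <- He. tauto.
Qed.

Lemma B_I_of_dprod F v L : FEat Gr F v -> (forall m, F m <-> In m L) ->
  I (dprod v L) -> B_I F.
Proof.
  intros Hfe HL IQ. split; [exists v; auto|]. exists v. split; auto.
  destruct (FE_restrict_vertex _ _ HG _ _ _ Hfe) as [Hv _].
  assert (HF := FE_restrict_rpath _ F v L Hfe HL).
  destruct (dprod_nodup v L Hv HF) as [L0 [Hn [He0 E0]]].
  exists (dprod v L0). split; [|rewrite <- E0; auto].
  exists L0. split; auto. split; [intro m; rewrite HL; auto|].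
  symmetry. apply prod_list_dprod; auto.
  apply Forall_forall. intros x Hx. rewrite Forall_forall in HF. apply HF, He0, Hx.
Qed.

Lemma B_I_add F v l : B_I F -> FEat Gr F v -> kdom Gr l -> rr l = v -> l <> v ->
  B_I (fun m => F m \/ m = l).
Proof.
  intros HB Hfe Hl Er Hne. pose proof Hfe as [_ [[LF HLF] _]].
  apply (B_I_of_dprod _ v (l :: LF)).
  - apply (FE_restrict_add _ _ HG); auto.
  - intro x. simpl. rewrite HLF. split; intros [Hx | Hx]; auto.
  - apply (ideal_mul_l I I_ideal). apply (B_I_dprod F v LF); auto.
Qed.

(* (S3): the factor of [l l'] is absorbed by that of [l]. *)
Lemma B_I_remove F l l' : B_I F -> F l -> kdom Gr l' -> ss l = rr l' ->
  F (cp l l') -> l' <> ss l -> B_I (fun m => F m /\ m <> cp l l').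
Proof.
  intros HB Fl Hl' El Fll' Hne. pose proof HB as [_ [v [Hfe _]]].
  pose proof Hfe as [_ [[LF HLF] _]].
  destruct (FE_restrict_member _ _ _ _ _ Hfe Fl) as [Hl [_ [Erl _]]].
  destruct (FE_restrict_vertex _ _ HG _ _ _ Hfe) as [Hv _].
  pose proof Hl' as [Hl'd _].
  set (LN := filter (keep (fun m => m <> cp l l')) LF).
  assert (HLN : forall m, (F m /\ m <> cp l l') <-> In m LN).
  { intro m. unfold LN. rewrite In_filter_keep, <- HLF. tauto. }
  assert (HFL := FE_restrict_rpath _ F v LF Hfe HLF).
  apply (B_I_of_dprod _ v LN); auto.
  { apply (FE_restrict_remove _ _ HG _ H_I_hereditary _ v l l'); auto. }
  assert (HFN : Forall (rpath v) LN).
  { apply Forall_forall. intros m Hm. apply HLN in Hm. rewrite Forall_forall in HFL.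
    apply HFL, HLF, Hm. }
  assert (IQ := B_I_dprod F v LF HB Hfe HLF).
  rewrite (dprod_set v LF (cp l l' :: l :: LN)) in IQ; auto.
  - simpl in IQ. rewrite mulA, dfac_absorb in IQ; auto; [|split; auto].
    change (dfac v l * dprod v LN) with (dprod v (l :: LN)) in IQ.
    rewrite dprod_dup in IQ; auto. apply HLN. split; auto.
    apply (comp_proper _ _ HG); auto.
  - intro x. simpl. rewrite <- HLN, <- HLF. split.
    + intro Fx. destruct (classic (x = cp l l')); [left | right; right]; auto.
    + intros [<- | [<- | [Fx _]]]; auto.
Qed.

(* (S4): [Delta^{(F \ {l}) u l F'} = Delta^{F \ {l}} (Delta_l + s_l Delta^{F'} s_l^* )]. *)
Lemma B_I_replace F F' l : B_I F -> B_I F' -> F l -> FEat Gr F' (ss l) ->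
  B_I (fun m => (F m /\ m <> l) \/ exists g, F' g /\ m = cp l g).
Proof.
  intros HB HB' Fl Hfe'. pose proof HB as [_ [v [Hfe _]]].
  pose proof Hfe as [_ [[LF HLF] _]]. pose proof Hfe' as [_ [[LF' HLF'] _]].
  destruct (FE_restrict_member _ _ _ _ _ Hfe Fl) as [Hl [_ [Erl _]]]. subst v.
  destruct (FE_restrict_vertex _ _ HG _ _ _ Hfe) as [Hv _].
  set (LFm := filter (keep (fun m => m <> l)) LF).
  apply (B_I_of_dprod _ (rr l) (LFm ++ map (cp l) LF')).
  { apply (FE_restrict_replace _ _ HG _ H_I_hereditary); auto. }
  { intro x. unfold LFm. rewrite in_app_iff, In_filter_keep, in_map_iff, <- HLF. split.
    - intros [Hx | [g [Fg ->]]]; [left; auto | right; exists g; split; auto; apply HLF'; auto].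
    - intros [Hx | [g [<- Fg]]]; [left; auto | right; exists g; split; auto; apply HLF'; auto]. }
  assert (HFL := FE_restrict_rpath _ F _ LF Hfe HLF).
  assert (HFL' := FE_restrict_rpath _ F' _ LF' Hfe' HLF').
  assert (HFmap : Forall (rpath (rr l)) (map (cp l) LF')).
  { apply Forall_forall. intros x Hx. apply in_map_iff in Hx. destruct Hx as [g [<- Hg]].
    rewrite Forall_forall in HFL'. destruct (HFL' g Hg) as [Hgd Erg].
    destruct (comp_props _ _ HG l g) as [? [? _]]; auto. split; auto. }
  rewrite dprod_app, dprod_map_comp, mulDr; auto.
  apply (ideal_add I I_ideal).
  - unfold LFm. rewrite dprod_remove; auto; [| apply HLF, Fl].
    apply (B_I_dprod F (rr l) LF); auto.
  - rewrite !mulA. apply (ideal_mul_r I I_ideal), (ideal_mul_l I I_ideal).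
    apply (B_I_dprod F' (ss l) LF'); auto.
Qed.

(* (S2): [Delta^{Ext(l; F)} = s_l^* Delta^F s_l] modulo the factors from [H_I]. *)
Lemma B_I_ext F v l : B_I F -> FEat Gr F v -> kdom Gr l -> rr l = v ->
  ~ (exists m a, F m /\ kdom Gr a /\ ss m = rr a /\ l = cp m a) -> B_I (Ext Gr l F).
Proof.
  intros HB Hfe Hl Er Hnot. pose proof Hfe as [_ [[LF HLF] [Hel _]]].
  pose proof Hl as [Hld Hlh].
  assert (HFL := FE_restrict_rpath _ F v LF Hfe HLF). subst v.
  destruct (conj_dprod_Ext l LF) as [C [HC [HFC EC]]]; auto.
  set (LX := filter (keep (fun a => ~ H_I (ss a))) C).
  assert (HLX : forall a, Ext Gr l F a <-> In a LX).
  { intro a. unfold LX. rewrite In_filter_keep, HC.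
    rewrite (restrict_Ext _ _ HG H_I); auto.
    - unfold Ext. split; intros [[m [Fm Xm]] Ha]; split; auto; exists m; rewrite HLF in *; auto.
    - intros m Fm. apply Hel, Fm. }
  apply (B_I_of_dprod _ (ss l) LX); auto.
  { apply (FE_restrict_ext _ _ HG _ H_I_hereditary _ (rr l)); auto. exists LX. auto. }
  apply (eqI_ideal I I_ideal _ (dprod (ss l) C)).
  - apply (eqI_sym I I_ideal). apply dprod_keep_mod; auto.
    + apply (rs_vertex _ _ HG); auto.
    + intros a Ha Hs. apply NNPP in Hs. rewrite Forall_forall in HFC.
      apply ideal_proj; [apply HFC, Ha | apply Hs].
  - rewrite <- EC. apply (ideal_mul_r I I_ideal), (ideal_mul_l I I_ideal).
    apply (B_I_dprod F (rr l) LF); auto.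
Qed.

Lemma B_I_satiated : satiated Gr B_I.
Proof.
  split; [intros F HB; exact (proj1 HB)|].
  split; [exact B_I_add|]. split; [exact B_I_ext|].
  split; [exact B_I_remove | exact B_I_replace].
Qed.

Variable calE : (kM G -> Prop) -> Prop.
Hypothesis calE_satiated : satiated G calE.
Hypothesis calE_relations : forall E v, calE E -> FEat G E v -> Delta_is G A s v E cs_zero.

Lemma dprod_relation E v L : calE E -> FEat G E v -> (forall m, E m <-> In m L) ->
  dprod v L = 0.
Proof.
  intros HE Hfe HL. destruct (calE_relations E v HE Hfe) as [L0 [Hn [He E0]]].
  assert (HF0 := FE_rpath E v L0 Hfe He).
  rewrite (dprod_set v L L0); [| apply Hfe | apply (FE_rpath E); auto |].
  - rewrite E0. symmetry. apply prod_list_dprod; auto. apply Hfe.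
  - intro x. rewrite <- HL, <- He. tauto.
Qed.

(* If every member of [E] has source in [H_I], then [s v = Delta^E = 0] modulo [I]. *)
Lemma H_I_saturated : E_saturated G calE H_I.
Proof.
  intros E v HE Hfe Hsrc. pose proof Hfe as [Hv [[L HL] [Hel _]]]. split; auto.
  assert (Hq := dprod_keep_mod v (fun _ => False) L Hv (FE_rpath E v L Hfe HL)).
  rewrite filter_keep_False, (dprod_relation E v L) in Hq; auto.
  apply (eqI_ideal I I_ideal _ 0); [apply (eqI_sym I I_ideal), Hq | apply ideal_zero; auto].
  intros m Hm _. apply ideal_proj; [apply Hel, HL, Hm | apply Hsrc, HL, Hm].
Qed.

(* Part (3): [Delta^{E \ E H_I}] is congruent to [Delta^E = 0] modulo [I]. *)
Lemma E_H_I_in_B_I F : E_of G calE H_I F -> B_I F.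
Proof.
  intros [E [v [HE [Hfe [Hnv ->]]]]]. pose proof Hfe as [Hv [[L HL] _]].
  apply (B_I_of_dprod _ v (filter (keep (fun m => ~ H_I (ss m))) L)).
  - apply (FE_restrict_of_E _ _ HG _ H_I_hereditary calE calE_satiated H_I_saturated); auto.
  - intro m. rewrite In_filter_keep, <- HL. tauto.
  - apply (eqI_ideal I I_ideal _ (dprod v L)).
    + apply (eqI_sym I I_ideal), (dprod_restrict_mod E); auto.
    + rewrite (dprod_relation E v L); auto. apply ideal_zero; auto.
Qed.

End Ideal.

End TCK.

Theorem mainTheorem13 (k : nat) (G : kg) (HG : is_kgraph G k)
  (Hfa : finitely_aligned G) (c : kM G -> kM G -> Cplx) (Hc : cocycle G c)
  (calE : (kM G -> Prop) -> Prop) (Hsat : satiated G calE)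
  (A : CStar) (s : kM G -> A) (Hu : is_universal G c calE A s)
  (I : A -> Prop) (HI : closed_ideal A I) :
  hereditary G (H_of G A s I) /\
  E_saturated G calE (H_of G A s I) /\
  satiated (restrict G (H_of G A s I)) (B_of G A s I (H_of G A s I)) /\
  (forall F, E_of G calE (H_of G A s I) F -> B_of G A s I (H_of G A s I) F).
Proof.
  destruct Hu as [[Ht Hrel] _].
  split; [|split; [|split]].
  - eapply H_I_hereditary; eassumption.
  - eapply H_I_saturated; eassumption.
  - eapply B_I_satiated; eassumption.
  - intros F HF. eapply E_H_I_in_B_I; eassumption.
Qed.
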